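(* Let $1<a<b$ be coprime integers and $D\subseteq G$ a subdiagram. Then there are bijections $N_b\to D_b$ and $N_r\to D_r$ (so $|N_b|=|D_b|$ and $|N_r|=|D_r|$). Moreover, if $D\neq\varnothing$ and $d$ is the cell of $D$ with the smallest value $g(d)$, then $d\notin D_b\cup D_r$.
   Context: Fix coprime integers $1<a<b$. Work in the grid $\mathbb{Z}^2$ ($+x$ east, $+y$ north). Let $g:\mathbb{Z}^2\to\mathbb{Z}$, $g(x,y)=ab-ax-by$; for a cell $c=(x,y)$ and integer $k$, $c-ka:=(x+k,y)$ and $c-kb:=(x,y+k)$. Let $G=\{(x,y)\in\mathbb{Z}_{\ge1}^2: g(x,y)>0\}$ ($g$ is injective on $G$). A subdiagram is a subset $D\subseteq G$ such that whenever $(x,y)\in D$, $(x',y')\in G$, $x'\le x$, $y'\le y$, we have $(x',y')\in D$. For cells $i,j$, write $i\to j$ iff $0\le g(j)-g(i)<a$. Let $U_D=\{(x,y)\in\mathbb{Z}^2: (x,y)\notin D,\ (x,y-1)\in D\cup(\mathbb{Z}_{\ge1}\times\mathbb{Z}_{\le0})\}$, and $N=\{(i,j)\in D\times U_D: i\to j\}$. Let $N_b$ be the set of $(i,j)\in N$ with $j$ strictly north of $i$ (larger $y$-coordinate), and $N_r$ the set of $(i,j)\in N$ with $j$ strictly south of $i$ (these two sets partition $N$). For $c\in D$ let $\mathrm{arm}_D(c)=\max\{k\ge0: c-ka\in D\}$, $\mathrm{leg}_D(c)=\max\{k\ge0: c-kb\in D\}$, $m(c)=\frac{\mathrm{leg}_D(c)}{\mathrm{arm}_D(c)+1}$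 and $M(c)=\frac{\mathrm{leg}_D(c)+1}{\mathrm{arm}_D(c)}$ (with $M(c)=+\infty$ if $\mathrm{arm}_D(c)=0$). Define $D_b=\{c\in D: M(c)\le a/b\}$ and $D_r=\{c\in D: m(c)\ge a/b\}$. *)

From Stdlib Require Import ZArith QArith.
Open Scope Z_scope.

Definition cell := (Z * Z)%type.

Definition g (a b : Z) (c : cell) : Z := a * b - a * fst c - b * snd c.

(* c - k a := (x+k, y) ;  c - k b := (x, y+k) *)
Definition sub_a (c : cell) (k : Z) : cell := (fst c + k, snd c).
Definition sub_b (c : cell) (k : Z) : cell := (fst c, snd c + k).

Definition inG (a b : Z) (c : cell) : Prop :=
  1 <= fst c /\ 1 <= snd c /\ 0 < g a b c.

Definition subdiagram (a b : Z) (D : cell -> Prop) : Prop :=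
  (forall c, D c -> inG a b c) /\
  (forall x y x' y', D (x, y) -> inG a b (x', y') -> x' <= x -> y' <= y ->
     D (x', y')).

Definition arrow (a b : Z) (i j : cell) : Prop :=
  0 <= g a b j - g a b i < a.

Definition low (c : cell) : Prop := 1 <= fst c /\ snd c <= 0.

Definition U (D : cell -> Prop) (c : cell) : Prop :=
  ~ (D c \/ low c) /\
  (D (fst c, snd c - 1) \/ low (fst c, snd c - 1)).

Definition Nset (a b : Z) (D : cell -> Prop) (p : cell * cell) : Prop :=
  D (fst p) /\ U D (snd p) /\ arrow a b (fst p) (snd p).

Definition Nb (a b : Z) (D : cell -> Prop) (p : cell * cell) : Prop :=
  Nset a b D p /\ snd (fst p) < snd (snd p).

Definition Nr (a b : Z) (D : cell -> Prop) (p : cell * cell) : Prop :=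
  Nset a b D p /\ snd (snd p) < snd (fst p).

Definition is_arm (D : cell -> Prop) (c : cell) (k : Z) : Prop :=
  0 <= k /\ D (sub_a c k) /\ (forall k', 0 <= k' -> D (sub_a c k') -> k' <= k).

Definition is_leg (D : cell -> Prop) (c : cell) (l : Z) : Prop :=
  0 <= l /\ D (sub_b c l) /\ (forall l', 0 <= l' -> D (sub_b c l') -> l' <= l).

(* M(c) <= a/b, where M(c) = (leg+1)/arm, and M(c) = +oo when arm = 0 *)
Definition M_le (a b arm leg : Z) : Prop :=
  arm <> 0 /\ (inject_Z (leg + 1) / inject_Z arm <= inject_Z a / inject_Z b)%Q.

Definition m_ge (a b arm leg : Z) : Prop :=
  (inject_Z a / inject_Z b <= inject_Z leg / inject_Z (arm + 1))%Q.

Definition Db (a b : Z) (D : cell -> Prop) (c : cell) : Prop :=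
  D c /\ exists k l, is_arm D c k /\ is_leg D c l /\ M_le a b k l.

Definition Dr (a b : Z) (D : cell -> Prop) (c : cell) : Prop :=
  D c /\ exists k l, is_arm D c k /\ is_leg D c l /\ m_ge a b k l.

Definition Bijection {A B : Type} (f : A -> B) : Prop :=
  exists h : B -> A, (forall x, h (f x) = x) /\ (forall y, f (h y) = y).

From Stdlib Require Import ZArith QArith Lia Classical ClassicalEpsilon ProofIrrelevance.
Open Scope Z_scope.

(* Every column x of D is an interval {1, ..., height x} and every row y an interval
   {1, ..., width y}.  Hence U_D consists of the cells (x, height x + 1) with x >= 1, and
   the arm and leg of (x, y) are width y - x and height x - y.  For i -> j the condition
   0 <= g j - g i < a makes the horizontal distance from j to i the ceiling (j north of i)
   or the floor (j south of i) of b/a times the vertical distance.  A pair (i, j) of N_b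
   goes to the cell in the column of j and the row of i, whose leg + 1 is the vertical
   distance; a pair of N_r goes to the cell in the column of i whose leg is the vertical
   distance. *)

Lemma Qdiv_inject_Z_le (p q r s : Z) : 0 < q -> 0 < s ->
  (inject_Z p / inject_Z q <= inject_Z r / inject_Z s)%Q <-> p * s <= r * q.
Proof.
  intros Hq Hs. destruct q as [|q|q]; try lia. destruct s as [|s|s]; try lia.
  unfold Qle, Qdiv, Qmult, Qinv, inject_Z; simpl. lia.
Qed.

Lemma Zdiv_eq_iff (n d q : Z) : 0 < d -> n / d = q <-> d * q <= n < d * q + d.
Proof.
  intros Hd. split.
  - intros <-. pose proof (Z.div_mod n d ltac:(lia)). pose proof (Z.mod_pos_bound n d Hd). lia.
  - intros Hq. symmetry. apply (Z.div_unique_pos n d q (n - d * q)); lia.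
Qed.

Lemma sig_bijection {A B : Type} (P : A -> Prop) (Q : B -> Prop) (f : A -> B) (h : B -> A) :
  (forall x, P x -> Q (f x)) -> (forall y, Q y -> P (h y)) ->
  (forall x, P x -> h (f x) = x) -> (forall y, Q y -> f (h y) = y) ->
  exists F : {x | P x} -> {y | Q y}, Bijection F.
Proof.
  intros fPQ hQP hfK fhK.
  exists (fun x => exist Q (f (proj1_sig x)) (fPQ _ (proj2_sig x))),
         (fun y => exist P (h (proj1_sig y)) (hQP _ (proj2_sig y))).
  split; intros [z Hz]; apply eq_sig_hprop; auto using proof_irrelevance; simpl.
  - exact (hfK z Hz).
  - exact (fhK z Hz).
Qed.

Section Top.
Variable P : Z -> Prop.

(* The maximum of P and 0; meaningless when P is unbounded above. *)
Definition top : Z :=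
  epsilon (inhabits 0) (fun m => (m = 0 \/ P m) /\ forall n, P n -> n <= m).

Lemma bounded_has_greatest (B : Z) : (forall n, P n -> n <= B) ->
  exists m, (m = 0 \/ P m) /\ forall n, P n -> n <= m.
Proof.
  intros HB.
  enough (Hd : forall d : nat, forall m, (m = 0 \/ P m) -> B - m <= Z.of_nat d ->
            exists m, (m = 0 \/ P m) /\ forall n, P n -> n <= m)
    by (apply (Hd (Z.to_nat B) 0); [left|]; lia).
  induction d as [|d IH]; intros m Pm Hm.
  - exists m. split; [exact Pm|]. intros n Pn. specialize (HB n Pn). lia.
  - destruct (classic (exists n, P n /\ m < n)) as [[n [Pn Hlt]]|Hnone].
    + apply (IH n); [right; exact Pn|]. lia.
    + exists m. split; [exact Pm|]. intros n Pn.
      apply Z.nlt_ge. intros Hlt. apply Hnone. eauto.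
Qed.

Variable B : Z.
Hypothesis P_range : forall n, P n -> 1 <= n <= B.
Hypothesis P_down : forall n m, P n -> 1 <= m <= n -> P m.

Lemma top_greatest : (top = 0 \/ P top) /\ forall n, P n -> n <= top.
Proof.
  unfold top. apply epsilon_spec, (bounded_has_greatest B).
  intros n Pn. apply P_range, Pn.
Qed.

Lemma top_nonneg : 0 <= top.
Proof.
  destruct top_greatest as [[-> | Ptop] _]; [lia|].
  apply P_range in Ptop. lia.
Qed.

Lemma top_spec n : P n <-> 1 <= n <= top.
Proof.
  destruct top_greatest as [Htop Hmax]. split.
  - intros Pn. split; [apply P_range, Pn | apply Hmax, Pn].
  - intros Hn. destruct Htop as [Htop | Ptop]; [lia|].
    apply (P_down top); [exact Ptop | exact Hn].
Qed.

End Top.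

Section Diagram.
Variables a b : Z.
Hypothesis a_pos : 0 < a.
Hypothesis b_pos : 0 < b.
Variable D : cell -> Prop.
Hypothesis HD : subdiagram a b D.

Lemma D_range x y : D (x, y) -> 1 <= x < b /\ 1 <= y < a.
Proof.
  intros Dxy. destruct (proj1 HD _ Dxy) as [Hx [Hy Hg]].
  unfold g in Hg; simpl in *. nia.
Qed.

Lemma D_down x y x' y' : D (x, y) -> 1 <= x' <= x -> 1 <= y' <= y -> D (x', y').
Proof.
  intros Dxy Hx' Hy'. apply (proj2 HD x y); [exact Dxy| |lia|lia].
  destruct (proj1 HD _ Dxy) as [_ [_ Hg]].
  unfold inG, g in *; simpl in *. nia.
Qed.

Definition height (x : Z) : Z := top (fun y => D (x, y)).
Definition width (y : Z) : Z := top (fun x => D (x, y)).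

Lemma height_nonneg x : 0 <= height x.
Proof.
  apply (top_nonneg _ a). intros y Dxy. apply D_range in Dxy. lia.
Qed.

Lemma D_iff_height x y : D (x, y) <-> 1 <= y <= height x.
Proof.
  apply (top_spec (fun y => D (x, y)) a).
  - intros y' Dxy. apply D_range in Dxy. lia.
  - intros y' y'' Dxy Hy''. apply (D_down x y'); [exact Dxy | | exact Hy''].
    apply D_range in Dxy. lia.
Qed.

Lemma D_iff_width x y : D (x, y) <-> 1 <= x <= width y.
Proof.
  apply (top_spec (fun x => D (x, y)) b).
  - intros x' Dxy. apply D_range in Dxy. lia.
  - intros x' x'' Dxy Hx''. apply (D_down x' y); [exact Dxy | exact Hx'' |].
    apply D_range in Dxy. lia.
Qed.

Lemma U_iff x y : U D (x, y) <-> 1 <= x /\ y = height x + 1.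
Proof.
  unfold U, low; simpl. pose proof (height_nonneg x) as Hh. split.
  - intros [Hout Hbelow].
    assert (Hx : 1 <= x) by (destruct Hbelow as [Dx | Hl]; [apply D_range in Dx|]; lia).
    rewrite !D_iff_height in *. lia.
  - intros [Hx ->]. rewrite !D_iff_height. lia.
Qed.

Lemma is_arm_iff x y k : D (x, y) -> is_arm D (x, y) k <-> k = width y - x.
Proof.
  intros Dxy. apply D_iff_width in Dxy.
  unfold is_arm, sub_a; simpl. split.
  - intros [Hk [Dk Hmax]]. apply D_iff_width in Dk.
    assert (width y - x <= k) by (apply Hmax; [lia | apply D_iff_width; lia]). lia.
  - intros ->. split; [lia | split; [apply D_iff_width; lia |]].
    intros k' _ Dk'. apply D_iff_width in Dk'. lia.
Qed.

Lemma is_leg_iff x y l : D (x, y) -> is_leg D (x, y) l <-> l = height x - y.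
Proof.
  intros Dxy. apply D_iff_height in Dxy.
  unfold is_leg, sub_b; simpl. split.
  - intros [Hl [Dl Hmax]]. apply D_iff_height in Dl.
    assert (height x - y <= l) by (apply Hmax; [lia | apply D_iff_height; lia]). lia.
  - intros ->. split; [lia | split; [apply D_iff_height; lia |]].
    intros l' _ Dl'. apply D_iff_height in Dl'. lia.
Qed.

Lemma Db_iff x y : Db a b D (x, y) <->
  D (x, y) /\ 0 < width y - x /\ b * (height x + 1 - y) <= a * (width y - x).
Proof.
  unfold Db, M_le. split.
  - intros [Dxy [k [l [Hk [Hl [Hk0 Hq]]]]]].
    apply is_arm_iff in Hk; [|exact Dxy]. apply is_leg_iff in Hl; [|exact Dxy]. subst k l.
    pose proof (proj1 (D_iff_width x y) Dxy).
    rewrite Qdiv_inject_Z_le in Hq by lia. split; [exact Dxy | nia].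
  - intros [Dxy [Hk Hineq]]. split; [exact Dxy |].
    exists (width y - x), (height x - y).
    rewrite is_arm_iff, is_leg_iff by exact Dxy.
    repeat split; [lia |]. apply Qdiv_inject_Z_le; lia.
Qed.

Lemma Dr_iff x y : Dr a b D (x, y) <->
  D (x, y) /\ a * (width y - x + 1) <= b * (height x - y).
Proof.
  unfold Dr, m_ge. split.
  - intros [Dxy [k [l [Hk [Hl Hq]]]]].
    apply is_arm_iff in Hk; [|exact Dxy]. apply is_leg_iff in Hl; [|exact Dxy]. subst k l.
    pose proof (proj1 (D_iff_width x y) Dxy).
    rewrite Qdiv_inject_Z_le in Hq by lia. split; [exact Dxy | lia].
  - intros [Dxy Hineq]. split; [exact Dxy |].
    exists (width y - x), (height x - y).
    rewrite is_arm_iff, is_leg_iff by exact Dxy.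
    pose proof (proj1 (D_iff_width x y) Dxy).
    repeat split. apply Qdiv_inject_Z_le; lia.
Qed.

Definition Nb_to_cell (p : cell * cell) : cell := (fst (snd p), snd (fst p)).

Definition cell_to_Nb (c : cell) : cell * cell :=
  let (x, y) := c in
  ((x + (b * (height x + 1 - y) + a - 1) / a, y), (x, height x + 1)).

Definition Nr_to_cell (p : cell * cell) : cell :=
  let '((xi, yi), (xj, yj)) := p in (xi, yj + height xi - yi).

Definition cell_to_Nr (c : cell) : cell * cell :=
  let (x, y) := c in
  let xj := x + b * (height x - y) / a in
  ((x, height xj + 1 + height x - y), (xj, height xj + 1)).

Lemma Nb_to_cell_Db p : Nb a b D p -> Db a b D (Nb_to_cell p).
Proof.
  destruct p as [[xi yi] [xj yj]]. unfold Nb, Nset, arrow, g; simpl.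
  rewrite U_iff. intros [[Di [[Hxj ->] Harrow]] Hnorth].
  pose proof (proj1 (D_iff_width _ _) Di). pose proof (proj1 (D_iff_height _ _) Di).
  unfold Nb_to_cell; simpl. rewrite Db_iff, D_iff_height. nia.
Qed.

Lemma cell_to_Nb_Nb c : Db a b D c -> Nb a b D (cell_to_Nb c).
Proof.
  destruct c as [x y]. rewrite Db_iff. intros [Dc [Harm Hineq]]. simpl.
  set (q := (b * (height x + 1 - y) + a - 1) / a).
  assert (Hq : a * q <= b * (height x + 1 - y) + a - 1 < a * q + a)
    by (apply Zdiv_eq_iff; auto).
  pose proof (proj1 (D_iff_width _ _) Dc). pose proof (proj1 (D_iff_height _ _) Dc).
  assert (q < width y - x + 1) by nia.
  unfold Nb, Nset, arrow, g; simpl. rewrite U_iff, D_iff_width. nia.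
Qed.

Lemma cell_to_NbK p : Nb a b D p -> cell_to_Nb (Nb_to_cell p) = p.
Proof.
  destruct p as [[xi yi] [xj yj]]. unfold Nb, Nset, arrow, g; simpl.
  rewrite U_iff. intros [[Di [[Hxj ->] Harrow]] Hnorth].
  replace ((b * (height xj + 1 - yi) + a - 1) / a) with (xi - xj)
    by (symmetry; apply Zdiv_eq_iff; lia).
  do 3 f_equal. lia.
Qed.

Lemma Nb_to_cellK c : Nb_to_cell (cell_to_Nb c) = c.
Proof. destruct c. reflexivity. Qed.

Lemma Nr_to_cell_Dr p : Nr a b D p -> Dr a b D (Nr_to_cell p).
Proof.
  destruct p as [[xi yi] [xj yj]]. unfold Nr, Nset, arrow, g; simpl.
  rewrite U_iff. intros [[Di [[Hxj ->] Harrow]] Hsouth].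
  pose proof (proj1 (D_iff_height _ _) Di). pose proof (height_nonneg xj).
  assert (Hw : width (height xj + 1 + height xi - yi) < xj).
  { apply Z.nle_gt. intros Hle.
    assert (Dj : D (xj, height xj + 1 + height xi - yi)) by (apply D_iff_width; lia).
    apply D_iff_height in Dj. lia. }
  unfold Nr_to_cell. rewrite Dr_iff, D_iff_height. nia.
Qed.

Lemma cell_to_Nr_Nr c : Dr a b D c -> Nr a b D (cell_to_Nr c).
Proof.
  destruct c as [x y]. rewrite Dr_iff. intros [Dc Hineq]. simpl.
  set (q := b * (height x - y) / a).
  assert (Hq : a * q <= b * (height x - y) < a * q + a) by (apply Zdiv_eq_iff; auto).
  pose proof (proj1 (D_iff_width _ _) Dc). pose proof (proj1 (D_iff_height _ _) Dc).
  assert (width y < x + q) by nia.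
  assert (Hh : height (x + q) < y).
  { apply Z.nle_gt. intros Hle.
    assert (Dq : D (x + q, y)) by (apply D_iff_height; lia).
    apply D_iff_width in Dq. lia. }
  pose proof (height_nonneg (x + q)).
  unfold Nr, Nset, arrow, g; simpl. rewrite U_iff, D_iff_height. nia.
Qed.

Lemma cell_to_NrK p : Nr a b D p -> cell_to_Nr (Nr_to_cell p) = p.
Proof.
  destruct p as [[xi yi] [xj yj]]. unfold Nr, Nset, arrow, g; simpl.
  rewrite U_iff. intros [[Di [[Hxj ->] Harrow]] Hsouth].
  replace (height xi - (height xj + 1 + height xi - yi)) with (yi - (height xj + 1)) by lia.
  replace (b * (yi - (height xj + 1)) / a) with (xj - xi)
    by (symmetry; apply Zdiv_eq_iff; lia).
  replace (xi + (xj - xi)) with xj by lia.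
  do 3 f_equal. lia.
Qed.

Lemma Nr_to_cellK c : Nr_to_cell (cell_to_Nr c) = c.
Proof. destruct c as [x y]. simpl. f_equal. lia. Qed.

Lemma min_cell_not_Db_Dr d : D d -> (forall c, D c -> g a b d <= g a b c) ->
  ~ (Db a b D d \/ Dr a b D d).
Proof.
  destruct d as [x y]. rewrite Db_iff, Dr_iff.
  intros Dd Hmin [[_ [Harm _]] | [_ Hleg]].
  - assert (Dw : D (width y, y)) by (apply D_iff_width; apply D_iff_width in Dd; lia).
    specialize (Hmin _ Dw). unfold g in Hmin; simpl in Hmin. nia.
  - pose proof (proj1 (D_iff_width _ _) Dd).
    assert (Dh : D (x, height x)) by (apply D_iff_height; apply D_iff_height in Dd; nia).
    specialize (Hmin _ Dh). unfold g in Hmin; simpl in Hmin. nia.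
Qed.

End Diagram.

Theorem lemma3p2 (a b : Z) (Ha : 1 < a) (Hab : a < b) (Hcop : Z.gcd a b = 1)
  (D : cell -> Prop) (HD : subdiagram a b D) :
  (exists f : {p | Nb a b D p} -> {c | Db a b D c}, Bijection f) /\
  (exists f : {p | Nr a b D p} -> {c | Dr a b D c}, Bijection f) /\
  (forall d : cell, D d -> (forall c, D c -> g a b d <= g a b c) ->
     ~ (Db a b D d \/ Dr a b D d)).
Proof.
  assert (a_pos : 0 < a) by lia. assert (b_pos : 0 < b) by lia.
  split; [|split].
  - apply (sig_bijection _ _ Nb_to_cell (cell_to_Nb a b D)).
    + apply Nb_to_cell_Db; assumption.
    + apply cell_to_Nb_Nb; assumption.
    + apply cell_to_NbK; assumption.
    + intros c _. apply Nb_to_cellK.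
  - apply (sig_bijection _ _ (Nr_to_cell D) (cell_to_Nr a b D)).
    + apply Nr_to_cell_Dr; assumption.
    + apply cell_to_Nr_Nr; assumption.
    + apply cell_to_NrK; assumption.
    + intros c _. apply Nr_to_cellK.
  - apply min_cell_not_Db_Dr; assumption.
Qed.
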